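(* Let $N\ge1$ be an integer and $\alpha,\beta,\gamma,\eta,\rho$ complex constants with $\beta\neq0$, $\gamma\neq0$, $\gamma\neq1$, and set $a=\alpha+\frac{\eta\rho}{1-\gamma}$, $b=\frac{\beta\rho}{1-\gamma}$, assuming $a\neq0$. For $N$-tuples $\underline z=(z_1,\dots,z_N)$, $\underline{\tilde z}=(\tilde z_1,\dots,\tilde z_N)$ define $$\hat g_n(\underline z,\underline{\tilde z})=a^{1-N}(\eta\tilde z_n+\beta)\left[\prod_{j=1}^{N}\frac{\tilde z_n-a z_j-b}{\eta z_j+\beta}\right]\left[\prod_{j=1,\,j\neq n}^{N}\frac{\eta\tilde z_j+a\beta-b\eta}{\tilde z_n-\tilde z_j}\right],\qquad n=1,\dots,N.$$ Let $\big(z_1(\ell),\dots,z_N(\ell)\big)$, $\ell=0,1,2,\dots$, be a sequence of $N$-tuples of complex numbers such that for every $\ell\ge0$ the numbers $z_1(\ell+2),\dots,z_N(\ell+2)$ are (in some order, with multiplicity) the $N$ roots in $z$ of $$\sum_{k=1}^{N}\frac{\hat g_k\big(\underline z(\ell),\underline z(\ell+1)\big)}{z-a\,z_k(\ell+1)-b}=\frac1\gamma .$$ Let $Z(\ell)=\mathrm{diag}\big(z_1(\ell),\dots,z_N(\ell)\big)$, $U(0)=Z(0)$, let $M(0)$ be the $N\times N$ matrix with entries $M_{nm}(0)=\hat g_m\big(\underline z(0),\underline z(1)\big)/\big(z_m(1)-a z_n(0)-b\big)$, and $$V(0)=[\eta Z(0)+\beta I]^{-1}\big\{M(0)Z(1)[M(0)]^{-1}-\alpha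 Z(0)\big\},$$ $A=\eta V(0)-\frac{\eta}{\beta}b\,I$, $B=\beta V(0)-bI$, $P(\ell_1,\ell_2)=\prod_{j=\ell_1}^{\ell_2}(A\gamma^{j}+aI)$ (equal to $I$ if $\ell_1>\ell_2$; the factors commute), and $$U(\ell)=U(0)P(0,\ell-1)+\sum_{k=1}^{\ell}\big(B\gamma^{k-1}+bI\big)P(k,\ell-1)$$ (the sum being $0$ if $\ell=0$). Then for every $\ell\ge0$ the multiset $\{z_1(\ell),\dots,z_N(\ell)\}$ coincides with the multiset of eigenvalues of $U(\ell)$.
   Context: $I$ is the $N\times N$ identity matrix. Throughout, data are assumed generic: for every $\ell$ the $z_n(\ell)$ are pairwise distinct, all denominators appearing are nonzero, and the matrices $M(0)$ and $\eta Z(0)+\beta I$ are invertible. *)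

(* Complex constants are taken in an arbitrary
   numClosedFieldType C (e.g. complex R, algC). *)
From mathcomp Require Import all_boot all_order all_algebra.
Set Implicit Arguments. Unset Strict Implicit. Unset Printing Implicit Defensive.
Import Order.TTheory GRing.Theory Num.Theory.
Local Open Scope ring_scope.

Section Defs.
Variables (C : numClosedFieldType) (N : nat).

Definition ghat (a b eta beta : C) (z zt : 'I_N -> C) (n : 'I_N) : C :=
  a ^- N.-1 * (eta * zt n + beta)
  * (\prod_(j < N) ((zt n - a * z j - b) / (eta * z j + beta)))
  * (\prod_(j < N | j != n) ((eta * zt j + a * beta - b * eta) / (zt n - zt j))).

Definition Zmat (v : 'I_N -> C) : 'M[C]_N := diag_mx (\row_n v n).

Definition M0 (a b eta beta : C) (z : nat -> 'I_N -> C) : 'M[C]_N :=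
  \matrix_(n, m) (ghat a b eta beta (z 0%N) (z 1%N) m
                   / (z 1%N m - a * z 0%N n - b)).

Definition V0 (alpha a b eta beta : C) (z : nat -> 'I_N -> C) : 'M[C]_N :=
  invmx (eta *: Zmat (z 0%N) + beta%:M)
  *m (M0 a b eta beta z *m Zmat (z 1%N) *m invmx (M0 a b eta beta z)
      - alpha *: Zmat (z 0%N)).

Definition Amat (alpha a b eta beta : C) z : 'M[C]_N :=
  eta *: V0 alpha a b eta beta z - (eta / beta * b)%:M.
Definition Bmat (alpha a b eta beta : C) z : 'M[C]_N :=
  beta *: V0 alpha a b eta beta z - b%:M.

(* Pex l1 l = P(l1, l-1) = prod_{j=l1}^{l-1} (A gamma^j + a I); identity if l1 >= l *)
Definition Pex (alpha a b eta beta gamma : C) z (l1 l : nat) : 'M[C]_N :=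
  \big[mulmx/1%:M]_(l1 <= j < l) (gamma ^+ j *: Amat alpha a b eta beta z + a%:M).

Definition Umat (alpha a b eta beta gamma : C) z (l : nat) : 'M[C]_N :=
  Zmat (z 0%N) *m Pex alpha a b eta beta gamma z 0 l
  + \sum_(1 <= k < l.+1)
      ((gamma ^+ k.-1 *: Bmat alpha a b eta beta z + b%:M)
         *m Pex alpha a b eta beta gamma z k l).

End Defs.

From mathcomp Require Import all_boot all_order all_algebra ring.
Set Implicit Arguments. Unset Strict Implicit. Unset Printing Implicit Defensive.
Import Order.TTheory GRing.Theory Num.Theory.
Local Open Scope ring_scope.

(* Let M(l) be the Cauchy-like matrix [ghat_m(z(l), z(l+1)) / (z_m(l+1) - a z_n(l) - b)]
   (so M(0) is the matrix of the statement).  One shows by induction that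
   U(l) P = P Z(l) and U(l+1) P M(l) = P M(l) Z(l+1) for P = M(0) ... M(l-1).
   Since A = (eta / beta) B, the definition of U gives the affine recursion
   U(l+1) = a U(l) + b + (eta U(l) + beta) G_l with G_(l+1) = gamma G_l.
   Two identities on M = M(l) let one conjugate it through: the displacement
   equation M Z(l+1) - a Z(l) M - b M = g, where every row of g is ghat, and
   the Lagrange interpolation identity
   sum_m ghat_m / ((z_m(l+1) - a z_n(l) - b) (eta z_m(l+1) + beta)) = 1 / (eta z_n(l) + beta).
   They show that U(l+2) P M(l) = P M(l) (a Z(l+1) + b + gamma g), and the
   rational equation defining z(l+2) says exactly that the columns of M(l+1)
   are eigenvectors of a Z(l+1) + b + gamma g for the eigenvalues z(l+2).
   The same equation forbids ghat from vanishing, so M(l+1) is invertible. *)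

Section DiagonalMatrices.
Variables (R : comNzRingType) (n : nat).
Implicit Types (f g : 'I_n -> R).

Lemma diag_row_affine f (c d : R) :
  c *: diag_mx (\row_i f i) + d%:M = diag_mx (\row_i (c * f i + d)).
Proof.
by apply/matrixP => i j; rewrite !mxE; case: eqP; rewrite ?mulr1n ?mulr0n ?mulr0 ?addr0.
Qed.

Lemma mul_diag_row f g :
  diag_mx (\row_i f i) *m diag_mx (\row_i g i) = diag_mx (\row_i (f i * g i)).
Proof. by rewrite mulmx_diag; congr diag_mx; apply/rowP => i; rewrite !mxE. Qed.

Lemma diag_row1 : diag_mx (\row_(i < n) 1) = 1%:M :> 'M[R]_n.
Proof. by apply/matrixP => i j; rewrite !mxE. Qed.

Lemma char_poly_diag_row f :
  char_poly (diag_mx (\row_i f i)) = \prod_i ('X - (f i)%:P).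
Proof.
by rewrite char_poly_trig ?diag_mx_is_trig //; apply: eq_bigr => i _; rewrite !mxE eqxx.
Qed.

End DiagonalMatrices.

Section SimilarMatrices.
Variables (R : comUnitRingType) (n : nat).
Implicit Types (A P : 'M[R]_n).

Lemma char_poly_conj P A : P \in unitmx ->
  char_poly (P *m A *m invmx P) = char_poly A.
Proof.
move=> uP; rewrite /char_poly.
have PPV : map_mx (@polyC R) P *m map_mx polyC (invmx P) = 1%:M.
  by rewrite -map_mxM mulmxV // map_mx1.
have -> : char_poly_mx (P *m A *m invmx P) =
    map_mx polyC P *m char_poly_mx A *m map_mx polyC (invmx P).
  rewrite /char_poly_mx !map_mxM mulmxBr mulmxBl mul_mx_scalar -scalemxAl.
  by rewrite PPV scalemx1.
by rewrite !det_mulmx mulrAC -det_mulmx PPV det1 mul1r.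
Qed.

Lemma affine_intertwine P A D (c d : R) : A *m P = P *m D ->
  (c *: A + d%:M) *m P = P *m (c *: D + d%:M).
Proof.
by move=> AP; rewrite mulmxDl mulmxDr -scalemxAl -scalemxAr AP scalar_mxC.
Qed.

End SimilarMatrices.

Section FieldMatrices.
Variables (F : fieldType) (n : nat).

Lemma unitmx_diag_row (f : 'I_n -> F) :
  (forall i, f i != 0) -> diag_mx (\row_i f i) \in unitmx.
Proof.
by move=> f_nz; rewrite unitmxE unitfE det_diag; apply/prodf_neq0 => i _; rewrite mxE.
Qed.

(* If [v Q = 0] with [v k != 0], multiplying by [prod_(j != k) (B - w j)]
   kills every row of [Q] but the [k]-th one. *)
Lemma unitmx_eigenrows (Q B : 'M[F]_n) (w : 'I_n -> F) : injective w ->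
  (forall i, row i Q != 0) -> Q *m B = diag_mx (\row_i w i) *m Q ->
  Q \in unitmx.
Proof.
move=> w_inj Q_rows QB; rewrite unitmxE unitfE; apply/negP => /det0P [v v_nz vQ].
have [k vk] : exists k, v 0 k != 0.
  apply/existsP; apply: contraNT v_nz; rewrite negb_exists => /forallP v0.
  by apply/eqP/rowP => j; rewrite mxE; apply/eqP/negPn.
have QB_prod (s : seq 'I_n) :
    Q *m \big[mulmx/1%:M]_(j <- s | j != k) (B - (w j)%:M)
    = diag_mx (\row_i \prod_(j <- s | j != k) (w i - w j)) *m Q.
  elim: s => [|j s IHs].
    by under eq_mx do rewrite big_nil; rewrite big_nil mulmx1 diag_row1 mul1mx.
  rewrite big_cons.
  have -> : \row_i \prod_(j0 <- j :: s | j0 != k) (w i - w j0)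
      = \row_i (if j != k then (w i - w j) * \prod_(j0 <- s | j0 != k) (w i - w j0)
                else \prod_(j0 <- s | j0 != k) (w i - w j0)).
    by apply/rowP => i; rewrite !mxE big_cons.
  case: ifP => jk; last by rewrite IHs.
  rewrite mulmxA mulmxBr QB mul_mx_scalar -mul_scalar_mx -mulmxBl -mulmxA IHs mulmxA.
  rewrite -[X in X - _]scale1r -raddfN /= diag_row_affine mul_diag_row.
  by congr (diag_mx _ *m _); apply/rowP => i; rewrite !mxE mul1r.
have := congr1 (mulmx^~ (\big[mulmx/1%:M]_(j | j != k) (B - (w j)%:M))) vQ.
rewrite mul0mx -mulmxA QB_prod mulmxA; set pk := \row_i _.
have -> : v *m diag_mx pk = (v 0 k * pk 0 k) *: delta_mx 0 k.
  apply/matrixP => i j; rewrite ord1 mul_mx_diag !mxE eqxx /=.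
  have [->|jk] := eqVneq j k; first by rewrite mulr1.
  by rewrite mulr0 (bigD1 j) //= subrr mul0r mulr0.
rewrite -scalemxAl -rowE => /eqP; rewrite scalemx_eq0 (negbTE (Q_rows k)) orbF.
rewrite mulf_eq0 (negbTE vk) mxE /=; apply/negP/prodf_neq0 => j jk.
by rewrite subr_eq0 (inj_eq w_inj) eq_sym.
Qed.

End FieldMatrices.

Section Lagrange.
Variables (F : fieldType) (n : nat).
Implicit Types (s x : 'I_n -> F) (m : 'I_n).

Lemma card_neq m : #|[pred j : 'I_n | j != m]| = n.-1.
Proof. by rewrite -[in RHS](card_ord n) -(cardC1 m); apply: eq_card => j; rewrite !inE. Qed.

Lemma prodr_const_neq m (c : F) : \prod_(j | j != m) c = c ^+ n.-1.
Proof. by rewrite prodr_const card_neq. Qed.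

Lemma prod_affine_neq s m (e c : F) : e != 0 ->
  \prod_(j | j != m) (e * s j + c) = (- e) ^+ n.-1 * \prod_(j | j != m) (- c / e - s j).
Proof.
move=> e_nz; rewrite -(prodr_const_neq m) -big_split /=.
by apply: eq_bigr => j _; field.
Qed.

Lemma size_prod_XsubC_neq s m : size (\prod_(j | j != m) ('X - (s j)%:P)) = n.
Proof.
rewrite -big_filter size_prod_XsubC size_filter.
have -> : count (fun j => j != m) (index_enum 'I_n) = n.-1.
  by rewrite -(card_neq m) cardE /enum_mem size_filter.
by case: n m => [[]|].
Qed.

Lemma coef_prod_XsubC_neq s m : (\prod_(j | j != m) ('X - (s j)%:P))`_n.-1 = 1.
Proof.
rewrite -(lead_coef_prod_XsubC (index_enum 'I_n) (fun j => j != m) s).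
by rewrite lead_coefE size_prod_XsubC_neq.
Qed.

Lemma horner_prod_XsubC (P : pred 'I_n) s t :
  (\prod_(j | P j) ('X - (s j)%:P)).[t] = \prod_(j | P j) (t - s j).
Proof. by rewrite horner_prod; apply: eq_bigr => j _; rewrite hornerXsubC. Qed.

Lemma lagrange_interp x (p : {poly F}) : injective x -> (size p <= n)%N ->
  p = \sum_m (p.[x m] / \prod_(j | j != m) (x m - x j))
         *: \prod_(j | j != m) ('X - (x j)%:P).
Proof.
move=> x_inj size_p; apply/eqP; rewrite -subr_eq0; apply/eqP.
apply: (@roots_geq_poly_eq0 _ _ [seq x i | i <- enum 'I_n]).
- apply/allP => _ /mapP [k _ ->]; rewrite rootE hornerD hornerN horner_sum.
  rewrite (bigD1 k) //= [X in _ - (_ + X)]big1 => [|m mk];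
    rewrite hornerZ horner_prod_XsubC.
    rewrite divfK ?addr0 ?subrr //; apply/prodf_neq0 => j jk.
    by rewrite subr_eq0 (inj_eq x_inj) eq_sym.
  by rewrite [X in _ * X](bigD1 k) 1?eq_sym //= subrr mul0r mulr0.
- by rewrite (map_inj_uniq x_inj) enum_uniq.
- rewrite size_map size_enum_ord (leq_trans (size_polyD _ _)) // geq_max size_p.
  rewrite size_polyN; apply: (big_ind (fun q : {poly F} => (size q <= n)%N)).
  + by rewrite size_poly0.
  + by move=> q1 q2 h1 h2; rewrite (leq_trans (size_polyD _ _)) // geq_max h1.
  + by move=> m _; rewrite (leq_trans (size_scale_leq _ _)) // size_prod_XsubC_neq.
Qed.

(* Interpolate [t |-> prod_(j != k) (t - s j)] at the nodes [x], then evaluate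
   the result at [- c / e], or take its leading coefficient when [e = 0]. *)
Lemma lagrange_affine_prod x s k (e c : F) : injective x ->
  \sum_m (\prod_(j | j != k) (x m - s j)) * (\prod_(j | j != m) (e * x j + c))
      / \prod_(j | j != m) (x m - x j)
  = \prod_(j | j != k) (e * s j + c).
Proof.
move=> x_inj; set f := \prod_(j | j != k) ('X - (s j)%:P).
have f_val t : f.[t] = \prod_(j | j != k) (t - s j) by exact: horner_prod_XsubC.
have f_interp : f = _ := lagrange_interp x_inj (eq_leq (size_prod_XsubC_neq s k)).
have [-> | e_nz] := eqVneq e 0.
  have prod_c t m : \prod_(j | j != m) (0 * t j + c) = c ^+ n.-1.
    by rewrite -(prodr_const_neq m); apply: eq_bigr => j _; rewrite mul0r add0r.
  rewrite prod_c; under eq_bigr => m _ do rewrite prod_c.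
  transitivity (c ^+ n.-1 * f`_n.-1); last by rewrite coef_prod_XsubC_neq mulr1.
  rewrite f_interp coef_sum mulr_sumr; apply: eq_bigr => m _.
  by rewrite coefZ coef_prod_XsubC_neq f_val mulr1 mulrCA mulrA.
rewrite (prod_affine_neq s k) // -f_val {1}f_interp horner_sum mulr_sumr.
apply: eq_bigr => m _; rewrite prod_affine_neq // hornerZ horner_prod_XsubC f_val.
by ring.
Qed.

End Lagrange.

Section CauchyLike.
Variables (C : numClosedFieldType) (N : nat) (a b eta beta : C).
Implicit Types (x y w : 'I_N -> C).
Local Notation ghat := (ghat a b eta beta).

Lemma Zmat_affine (f : 'I_N -> C) (c d : C) :
  c *: Zmat f + d%:M = Zmat (fun n => c * f n + d).
Proof. exact: diag_row_affine. Qed.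

Lemma Zmat_mulV (f : 'I_N -> C) : (forall i, f i != 0) ->
  Zmat f *m Zmat (fun i => (f i)^-1) = 1%:M.
Proof.
move=> f_nz; rewrite /Zmat mul_diag_row -diag_row1; congr diag_mx.
by apply/rowP => i; rewrite !mxE mulfV.
Qed.

Definition Mmat y x : 'M[C]_N := \matrix_(n, m) (ghat y x m / (x m - a * y n - b)).
Definition Gmat y x : 'M[C]_N := \matrix_(n, m) ghat y x m.

Lemma ghat_cauchy_factor y x (m n : 'I_N) :
  eta * x m + beta != 0 -> x m - a * y n - b != 0 ->
  ghat y x m / (x m - a * y n - b) / (eta * x m + beta)
  = a ^- N.-1 / \prod_j (eta * y j + beta)
    * (\prod_(j | j != n) (x m - a * y j - b)
       * \prod_(j | j != m) (eta * x j + a * beta - b * eta)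
       / \prod_(j | j != m) (x m - x j)).
Proof.
move=> xm_nz xmn_nz; rewrite /ghat !prodf_div (bigD1 n) //=.
(* As atoms these factors need not be nonzero for [field]. *)
move: (a ^- N.-1) (\prod_j _)^-1 (\prod_(j | j != m) (x m - x j))^-1 => c q1 q2.
by field; rewrite xm_nz xmn_nz.
Qed.

Lemma sum_ghat_cauchy y x (n : 'I_N) : injective x -> a != 0 ->
  (forall j, eta * y j + beta != 0) -> (forall m, eta * x m + beta != 0) ->
  (forall m, x m - a * y n - b != 0) ->
  \sum_m ghat y x m / (x m - a * y n - b) / (eta * x m + beta)
  = (eta * y n + beta)^-1.
Proof.
move=> x_inj a_nz y_nz x_nz xy_nz.
have lag : \sum_m \prod_(j | j != n) (x m - a * y j - b)
      * \prod_(j | j != m) (eta * x j + a * beta - b * eta) / \prod_(j | j != m) (x m - x j)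
    = a ^+ N.-1 * \prod_(j | j != n) (eta * y j + beta).
  rewrite -(prodr_const_neq n) -big_split /=.
  rewrite [RHS](eq_bigr (fun j => eta * (a * y j + b) + (a * beta - b * eta))) => [|j _];
    last by ring.
  rewrite -(lagrange_affine_prod _ _ _ _ x_inj); apply: eq_bigr => m _.
  by congr (_ * _ / _); apply: eq_bigr => j _; ring.
under eq_bigr do rewrite ghat_cauchy_factor //.
rewrite -mulr_sumr lag (bigD1 n) //=.
have : \prod_(j | j != n) (eta * y j + beta) != 0 by apply/prodf_neq0.
move: (\prod_(j | j != n) _) (y_nz n) => p yn_nz p_nz.
by field; rewrite p_nz yn_nz expf_neq0.
Qed.

Lemma Mmat_displacement y x : (forall m n, x m - a * y n - b != 0) ->
  Mmat y x *m Zmat x - a *: (Zmat y *m Mmat y x) - b *: Mmat y x = Gmat y x.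
Proof.
move=> xy_nz; apply/matrixP => n m.
by rewrite /Zmat mul_mx_diag mul_diag_mx !mxE; field; apply: xy_nz.
Qed.

Lemma Mmat_weighted_Gmat y x : injective x -> a != 0 ->
  (forall j, eta * y j + beta != 0) -> (forall m, eta * x m + beta != 0) ->
  (forall m n, x m - a * y n - b != 0) ->
  Mmat y x *m Zmat (fun m => (eta * x m + beta)^-1) *m Gmat y x
  = Zmat (fun n => (eta * y n + beta)^-1) *m Gmat y x.
Proof.
move=> x_inj a_nz y_nz x_nz xy_nz; apply/matrixP => n m.
rewrite /Zmat mul_mx_diag mul_diag_mx !mxE -(sum_ghat_cauchy (n := n) x_inj) // mulr_suml.
by apply: eq_bigr => k _; rewrite !mxE.
Qed.

Lemma Mmat_eigen (gamma : C) y x w : gamma != 0 ->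
  (forall m k, w m - a * x k - b != 0) ->
  (forall m, \sum_k ghat y x k / (w m - a * x k - b) = gamma^-1) ->
  (a *: Zmat x + b%:M + gamma *: Gmat y x) *m Mmat x w = Mmat x w *m Zmat w.
Proof.
move=> g_nz wx_nz rec; rewrite /Zmat mulmxDl diag_row_affine -scalemxAl.
apply/matrixP => k m; rewrite mul_diag_mx mul_mx_diag !mxE.
under eq_bigr do rewrite !mxE mulrA (mulrC _ (ghat x w m)) -mulrA.
rewrite -mulr_sumr rec; move: (wx_nz m k) => wxmk_nz.
by field; rewrite wxmk_nz g_nz.
Qed.

Lemma unitmx_Mmat (gamma : C) y x w : gamma != 0 -> injective w ->
  (forall m k, w m - a * x k - b != 0) ->
  (forall m, \sum_k ghat y x k / (w m - a * x k - b) = gamma^-1) ->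
  (forall m, ghat x w m != 0) -> Mmat x w \in unitmx.
Proof.
move=> g_nz w_inj wx_nz rec g_nz'; rewrite -unitmx_tr.
apply: (unitmx_eigenrows (B := (a *: Zmat x + b%:M + gamma *: Gmat y x)^T) w_inj).
  move=> m; apply/eqP => /rowP /(_ m) /eqP; rewrite !mxE mulf_eq0 invr_eq0.
  by rewrite (negbTE (g_nz' m)) (negbTE (wx_nz m m)).
by rewrite -trmx_mul Mmat_eigen // trmx_mul tr_diag_mx.
Qed.

Lemma ghat_eq0 y x m : a != 0 -> injective x ->
  (forall j, eta * y j + beta != 0) -> eta * x m + beta != 0 ->
  (forall j, x m - a * y j - b != 0) ->
  ghat y x m = 0 -> exists2 j, j != m & eta * x j + a * beta - b * eta = 0.
Proof.
move=> a_nz x_inj y_nz xm_nz xy_nz /eqP; rewrite /ghat !mulf_eq0 invr_eq0 expf_eq0.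
rewrite (negbTE a_nz) andbF (negbTE xm_nz) /=.
case/orP => /prodf_eq0 [j jm].
  by rewrite mulf_eq0 invr_eq0 (negbTE (xy_nz _)) (negbTE (y_nz _)).
rewrite mulf_eq0 invr_eq0 [x m - _ == 0]subr_eq0 (inj_eq x_inj) (eq_sym m) (negbTE jm) orbF.
by exists j => //; apply/eqP.
Qed.

Lemma ghat_eq0_off y x j k : eta * x j + a * beta - b * eta = 0 -> k != j ->
  ghat y x k = 0.
Proof.
move=> xj0 kj; apply/eqP; rewrite /ghat mulf_eq0; apply/orP; right.
by apply/prodf_eq0; exists j; rewrite 1?eq_sym // xj0 mul0r.
Qed.

(* A vanishing [ghat y x m] would leave a single nonzero term in the
   recursion, forcing all the [w n] to coincide. *)
Lemma ghat_neq0 (gamma : C) y x w : a != 0 -> gamma != 0 ->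
  injective x -> injective w ->
  (forall j, eta * y j + beta != 0) -> (forall m, eta * x m + beta != 0) ->
  (forall m j, x m - a * y j - b != 0) ->
  (forall n, \sum_k ghat y x k / (w n - a * x k - b) = gamma^-1) ->
  forall m, ghat y x m != 0.
Proof.
move=> a_nz g_nz x_inj w_inj y_nz x_nz xy_nz rec m; apply/eqP => gm0.
have [j jm xj0] := ghat_eq0 a_nz x_inj y_nz (x_nz m) (xy_nz m) gm0.
have rec_j n : ghat y x j / (w n - a * x j - b) = gamma^-1.
  rewrite -(rec n) (bigD1 j) //= big1 ?addr0 // => k kj.
  by rewrite (ghat_eq0_off _ xj0 kj) mul0r.
have gj_nz : ghat y x j != 0.
  by apply: contraNneq (invr_neq0 g_nz) => gj0; rewrite -(rec_j j) gj0 mul0r.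
move: (rec_j j); rewrite -(rec_j m) => /(mulfI gj_nz) /invr_inj /addIr /addIr.
by move/w_inj/eqP; rewrite (negbTE jm).
Qed.

Lemma affine_step_intertwine (gamma : C) y x (P G Y X W : 'M[C]_N) :
  injective x -> a != 0 ->
  (forall j, eta * y j + beta != 0) -> (forall m, eta * x m + beta != 0) ->
  (forall m n, x m - a * y n - b != 0) -> P \in unitmx ->
  Y *m P = P *m Zmat y -> X *m (P *m Mmat y x) = (P *m Mmat y x) *m Zmat x ->
  X = a *: Y + b%:M + (eta *: Y + beta%:M) *m G ->
  W = a *: X + b%:M + (eta *: X + beta%:M) *m (gamma *: G) ->
  W *m (P *m Mmat y x) = (P *m Mmat y x) *m (a *: Zmat x + b%:M + gamma *: Gmat y x).
Proof.
move=> x_inj a_nz y_nz x_nz xy_nz P_unit YP XQ recX recW.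
set M := Mmat y x in XQ *; set Q := P *m M in XQ *.
pose Dx := Zmat (fun m => (eta * x m + beta)^-1).
have YbP := affine_intertwine eta beta YP; rewrite Zmat_affine in YbP.
have XbQ := affine_intertwine eta beta XQ; rewrite Zmat_affine in XbQ.
have Yb_unit : eta *: Y + beta%:M \in unitmx.
  rewrite -[_ + _](mulmxK P_unit) YbP !unitmx_mul unitmx_inv P_unit andbT.
  exact: unitmx_diag_row.
have GQ : G *m Q = Q *m (Dx *m Gmat y x).
  apply: (can_inj (mulKmx Yb_unit)).
  have -> : (eta *: Y + beta%:M) *m (G *m Q) = P *m Gmat y x.
    rewrite mulmxA.
    have -> : (eta *: Y + beta%:M) *m G = X - (a *: Y + b%:M).
      by rewrite recX addrAC subrr add0r.
    rewrite mulmxBl XQ mulmxDl -scalemxAl mul_scalar_mx /Q (mulmxA Y) YP.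
    by rewrite -(Mmat_displacement xy_nz) !mulmxBr -!scalemxAr !mulmxA opprD addrA.
  rewrite /Q !mulmxA YbP -!mulmxA (mulmxA M) Mmat_weighted_Gmat // mulmxA.
  by rewrite -mulmxA (mulmxA (Zmat _)) Zmat_mulV // mul1mx.
rewrite recW mulmxDl [(a *: X + _) *m _]mulmxDl -scalemxAl XQ mul_scalar_mx.
rewrite -[_ *m (gamma *: G) *m Q]mulmxA -scalemxAl GQ -scalemxAr.
rewrite [_ *m (Q *m _)]mulmxA XbQ -(mulmxA Q) (mulmxA (Zmat _) Dx) Zmat_mulV // mul1mx.
by rewrite !mulmxDr -!scalemxAr mul_mx_scalar.
Qed.

End CauchyLike.

Section UmatRecursion.
Variables (C : numClosedFieldType) (N : nat).
Variables (alpha a b eta beta gamma : C) (z : nat -> 'I_N -> C).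
Local Notation A := (Amat alpha a b eta beta z).
Local Notation B := (Bmat alpha a b eta beta z).
Local Notation P := (Pex alpha a b eta beta gamma z).
Local Notation U := (Umat alpha a b eta beta gamma z).

Lemma Pex_recr k l : (k <= l)%N -> P k l.+1 = P k l *m (gamma ^+ l *: A + a%:M).
Proof.
move=> kl; rewrite /Pex.
change ((\prod_(k <= j < l.+1) (gamma ^+ j *: A + a%:M))%R
        = (\prod_(k <= j < l) (gamma ^+ j *: A + a%:M))%R * (gamma ^+ l *: A + a%:M)).
exact: big_nat_recr.
Qed.

Lemma Pex_nil k l : (l <= k)%N -> P k l = 1%:M.
Proof. by move=> lk; rewrite /Pex big_geq. Qed.

Lemma Umat0 : U 0 = Zmat (z 0%N).
Proof. by rewrite /Umat Pex_nil // big_geq // mulmx1 addr0. Qed.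

Lemma UmatS l : U l.+1 = U l *m (gamma ^+ l *: A + a%:M) + (gamma ^+ l *: B + b%:M).
Proof.
rewrite /Umat big_nat_recr //= (Pex_nil (leqnn l.+1)) mulmx1 Pex_recr //.
rewrite mulmxDl mulmxA addrA mulmx_suml; congr (_ + _ + _).
by apply: eq_big_nat => k /andP [_ kl]; rewrite Pex_recr ?mulmxA.
Qed.

Lemma UmatS_affine l : beta != 0 ->
  U l.+1 = a *: U l + b%:M + (eta *: U l + beta%:M) *m (gamma ^+ l / beta *: B).
Proof.
move=> beta_nz; rewrite UmatS; move: (U l) => u.
have -> : A = (eta / beta) *: B.
  by rewrite /Amat /Bmat scalerBr scalerA divfK // scale_scalar_mx.
rewrite mulmxDr mulmxDl mul_mx_scalar -!scalemxAr -scalemxAl mul_scalar_mx !scalerA.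
rewrite mulrCA mulrA divfK // -!addrA.
have -> : eta * gamma ^+ l / beta = gamma ^+ l / beta * eta by ring.
by rewrite addrCA; congr (_ + _); rewrite addrA addrC.
Qed.

Lemma Umat1 : beta != 0 -> a = alpha + eta * b / beta ->
  eta *: Zmat (z 0%N) + beta%:M \in unitmx ->
  U 1 = M0 a b eta beta z *m Zmat (z 1%N) *m invmx (M0 a b eta beta z).
Proof.
move=> beta_nz a_def Zb_unit.
rewrite UmatS_affine // expr0 mul1r Umat0 /Bmat scalerBr scalerA mulVf // scale1r.
rewrite scale_scalar_mx mulmxBr /V0 mulKVmx // mul_mx_scalar.
rewrite scalerDr scalerA scale_scalar_mx (mulrAC _ b beta) mulVf // mul1r.
have -> : beta^-1 * b * eta = eta * b / beta by rewrite mulrC mulrA mulrAC.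
rewrite {1}a_def scalerDl; set K := M0 _ _ _ _ _ *m _ *m _.
by rewrite -[K - _ - _]addrA -opprD addrA (addrC _ K) (addrA (alpha *: _)) addrK.
Qed.

End UmatRecursion.

Unset Implicit Arguments.

Section Spectrum.
Context {C : numClosedFieldType} {N : nat}.
Context {alpha a b eta beta gamma : C} {z : nat -> 'I_N -> C}.
Hypotheses (beta_nz : beta != 0) (gamma_nz : gamma != 0) (a_nz : a != 0).
Hypothesis a_def : a = alpha + eta * b / beta.
Hypothesis z_inj : forall l, injective (z l).
Hypothesis z_nz : forall l n, eta * z l n + beta != 0.
Hypothesis zz_nz : forall l n k, z l.+1 n - a * z l k - b != 0.
Hypothesis M0_unit : M0 a b eta beta z \in unitmx.
Hypothesis Zb_unit : eta *: Zmat (z 0%N) + beta%:M \in unitmx.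
Hypothesis z_rec : forall l n,
  \sum_k ghat a b eta beta (z l) (z l.+1) k / (z l.+2 n - a * z l.+1 k - b) = gamma^-1.

Local Notation U := (Umat alpha a b eta beta gamma z).
Local Notation M l := (Mmat a b eta beta (z l) (z l.+1)).

Lemma Umat_intertwine l : exists2 P, P \in unitmx &
  [/\ M l \in unitmx, U l *m P = P *m Zmat (z l)
    & U l.+1 *m (P *m M l) = (P *m M l) *m Zmat (z l.+1)].
Proof.
elim: l => [|l [P P_unit [M_unit UP UPM]]].
  exists 1%:M; first exact: unitmx1.
  by rewrite Umat0 mulmx1 mul1mx !mul1mx Umat1 // mulmxKV.
exists (P *m M l); first by rewrite unitmx_mul P_unit M_unit.
have ghat_nz := ghat_neq0 a_nz gamma_nz (z_inj l.+2) (z_inj l.+3) (z_nz l.+1)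
  (z_nz l.+2) (zz_nz l.+1) (z_rec l.+1).
split => //.
- exact: unitmx_Mmat gamma_nz (z_inj l.+2) (zz_nz l.+1) (z_rec l) ghat_nz.
have step : U l.+2 *m (P *m M l)
    = (P *m M l) *m (a *: Zmat (z l.+1) + b%:M + gamma *: Gmat a b eta beta (z l) (z l.+1)).
  apply: (affine_step_intertwine (G := gamma ^+ l / beta *: Bmat alpha a b eta beta z)
    (z_inj l.+1) a_nz (z_nz l) (z_nz l.+1) (zz_nz l) P_unit UP UPM).
    by rewrite UmatS_affine.
  by rewrite UmatS_affine // exprS -mulrA -scalerA.
by rewrite mulmxA step -!mulmxA Mmat_eigen //; apply: z_rec.
Qed.

End Spectrum.

Theorem proposition2p4p1 (C : numClosedFieldType) (N : nat)
    (alpha beta gamma eta rho a b : C) (z : nat -> 'I_N -> C) :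
  (0 < N)%N ->
  beta != 0 -> gamma != 0 -> gamma != 1 ->
  a = alpha + eta * rho / (1 - gamma) ->
  b = beta * rho / (1 - gamma) ->
  a != 0 ->
  (forall l (n m : 'I_N), n != m -> z l n != z l m) ->
  (forall l (n : 'I_N), eta * z l n + beta != 0) ->
  (forall l (n k : 'I_N), z l.+1 n - a * z l k - b != 0) ->
  M0 a b eta beta z \in unitmx ->
  eta *: Zmat (z 0%N) + beta%:M \in unitmx ->
  (forall l (n : 'I_N),
     \sum_(k < N) ghat a b eta beta (z l) (z l.+1) k
                   / (z l.+2 n - a * z l.+1 k - b) = gamma^-1) ->
  forall l : nat,
    char_poly (Umat alpha a b eta beta gamma z l)
    = \prod_(n < N) ('X - (z l n)%:P).
Proof.
move=> _ beta_nz gamma_nz gamma_neq1 a_eq b_eq a_nz z_neq z_nz zz_nz M0_unit Zb_unit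
  z_rec l.
have z_inj l' : injective (z l') by move=> n m; apply: contra_eq (z_neq l' n m).
have a_def : a = alpha + eta * b / beta.
  have gamma1_nz : 1 - gamma != 0 by rewrite subr_eq0 eq_sym.
  by rewrite a_eq b_eq; field; rewrite beta_nz gamma1_nz.
have [P P_unit [_ UP _]] := Umat_intertwine beta_nz gamma_nz a_nz a_def z_inj z_nz
  zz_nz M0_unit Zb_unit z_rec l.
by rewrite -[Umat _ _ _ _ _ _ _ _](mulmxK P_unit) UP char_poly_conj // char_poly_diag_row.
Qed.
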